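(* Let $\mathcal{C}$ be a finite set of size $k\geq1$ and let $(\omega_n)_{n=0}^\infty$ be a sequence of distributions on $\mathcal{C}$ such that $\omega_n\trianglelefteq\omega_{n+1}$ for all $n$. Suppose there is a real $A\geq 1$ such that for all $n\in\mathbb{N}$ and all $\alpha\in\mathcal{D}^+(\omega_n,\omega_{n+1})$, \[\|\omega_{n+1}-\omega_n\|_1\leq A\cdot(\omega_{n+1}(\alpha)-\omega_n(\alpha)).\] Then \[\sum_{n=0}^\infty\|\omega_{n+1}-\omega_n\|_1\leq\frac{(1+A)^{k+1}}{A}\cdot\mathrm{disc}(\omega_0)<\infty.\]
   Context: A distribution on $\mathcal{C}$ is a function $\omega\colon\mathcal{C}\to[0,1]$ with $\sum_\alpha\omega(\alpha)=1$; $\|\omega\|_1=\sum_\alpha|\omega(\alpha)|$; $\mathrm{disc}(\omega)=\max_{\alpha}|\omega(\alpha)-1/k|$. For distributions $\omega,\eta$: $\mathcal{D}^+(\omega,\eta)=\{\alpha:\eta(\alpha)>\omega(\alpha)\}$, $\mathcal{D}^-(\omega,\eta)=\{\alpha:\eta(\alpha)<\omega(\alpha)\}$. We write $\omega\vartriangleleft\eta$ if there is $\alpha\in\mathcal{D}^+(\omega,\eta)$ such that $\eta(\alpha)\leq\eta(\beta)$ for all $\beta\in\mathcal{D}^-(\omega,\eta)$, and $\omega\trianglelefteq\eta$ if $\omega\vartriangleleft\eta$ or $\omega=\eta$. *)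

From HB Require Import structures.
From mathcomp Require Import all_boot all_order all_algebra.
Set Implicit Arguments. Unset Strict Implicit. Unset Printing Implicit Defensive.
Import Order.TTheory GRing.Theory Num.Theory.
Local Open Scope ring_scope.

Section Dist.
Variables (R : realFieldType) (C : finType).

Definition distribution (w : C -> R) : Prop :=
  (forall a, 0 <= w a <= 1) /\ \sum_(a : C) w a = 1.

Definition norm1 (w : C -> R) : R := \sum_(a : C) `|w a|.

Definition disc (w : C -> R) : R :=
  \big[Num.max/0]_(a : C) `|w a - (#|C|%:R)^-1|.

Definition Dplus (w e : C -> R) : pred C := [pred a | w a < e a].
Definition Dminus (w e : C -> R) : pred C := [pred a | e a < w a].

Definition tri (w e : C -> R) : Prop :=
  exists2 a, a \in Dplus w e & forall b, b \in Dminus w e -> e a <= e b.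

Definition trile (w e : C -> R) : Prop := tri w e \/ w = e.

End Dist.

From HB Require Import structures.
From mathcomp Require Import all_boot all_order all_algebra.
From mathcomp Require Import ring lra.
Import Order.TTheory GRing.Theory Num.Theory.
Local Open Scope ring_scope.

(* A potential-function argument.  For a function f on a finite type T,
   minsum f j is the least f-mass of a j-subset of T, and
     potential A f = sum_(1 <= j <= |T|) (1+A)^(|T|-j) * minsum f j.
   1. potential_step: if f <|= g with witness a and the A-bound of the
      theorem holds, then ||g - f||_1 <= A * (potential g - potential f).
      With U = {x | g x < g a} + {a} and q = |U|, an exchange argument shows
      that minsum does not decrease at sizes < q, gains g a - f a at size q
      and loses at most ||g - f||_1 at sizes > q; the geometric weights make
      the gain at q pay for all the losses.
   2. potential_gap: for distributions f, f0 the potential difference is at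
      most disc f0 * sum_j (1+A)^(|T|-j) * j, since minsum f j <= j/|T| while
      minsum f0 j >= j/|T| - j * disc f0.
   3. weighted_count_bound: A * sum_j (1+A)^(|T|-j) * j <= (1+A)^(|T|+1) / A. *)

Section SubsetSums.
Context {R : realFieldType} {T : finType}.
Implicit Types (f : T -> R) (S U V X Y : {set T}).

Lemma exists_subset_card (V : {set T}) (n : nat) :
  (n <= #|V|)%N -> exists2 S : {set T}, S \subset V & #|S| = n.
Proof.
elim: n => [|n IH] hn; first by exists set0; rewrite ?sub0set ?cards0.
have [S sSV cS] := IH (ltnW hn).
have : (0 < #|V :\: S|)%N by rewrite cardsDS // cS subn_gt0.
rewrite card_gt0 => /set0Pn [x]; rewrite inE => /andP [xS xV].
exists (x |: S); first by rewrite subUset sub1set xV sSV.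
by rewrite cardsU1 xS cS.
Qed.

(* If f is pointwise smaller on X than on Y, then the average of f over X is
   at most its average over Y (written without division). *)
Lemma card_mul_sum_le f X Y :
  (forall x y, x \in X -> y \in Y -> f x <= f y) ->
  #|Y|%:R * \sum_(x in X) f x <= #|X|%:R * \sum_(y in Y) f y.
Proof.
move=> le_XY; rewrite !mulr_natl -!sumr_const exchange_big /=.
by apply: ler_sum => x xX; apply: ler_sum => y yY; apply: le_XY.
Qed.

Lemma exchange_into_lower f U S :
  (forall x y, x \in U -> y \notin U -> f x <= f y) -> (#|S| <= #|U|)%N ->
  exists2 S' : {set T}, S' \subset U &
    #|S'| = #|S| /\ \sum_(a in S') f a <= \sum_(a in S) f a.
Proof.
move=> lowU leSU.
have le_out_in : (#|S :\: U| <= #|U :\: S|)%N.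
  by move: leSU; rewrite -(cardsID U S) -(cardsID S U) setIC leq_add2l.
have [Y sYUS cY] := exists_subset_card _ _ le_out_in.
have dis : [disjoint Y & S :&: U].
  apply: disjointWl sYUS _; rewrite -setI_eq0; apply/eqP/setP => y.
  by rewrite !inE; case: (y \in S); case: (y \in U).
exists ((S :&: U) :|: Y).
  by rewrite subUset subsetIr (subset_trans sYUS) ?subsetDl.
split.
  by rewrite cardsU [_ :&: Y]setIC (disjoint_setI0 dis) cards0 subn0 cY -(cardsID U S).
rewrite (big_setID (S :&: U)) setUK setDUl setDv set0U.
rewrite (setDidPl dis) [leRHS](big_setID U) lerD //.
have lowY x y : x \in Y -> y \in S :\: U -> f x <= f y.
  by move=> /(subsetP sYUS); rewrite !inE => /andP[_ Ux] /andP[nUy _]; apply: lowU.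
have := card_mul_sum_le _ _ _ lowY; rewrite cY.
have [m0 | m_pos] := posnP #|S :\: U|.
  by rewrite (cards0_eq m0); move: m0; rewrite -cY => /cards0_eq ->.
by rewrite ler_pM2l ?ltr0n.
Qed.

(* Some j-subset of an n-set V has f-average at most the f-average on V:
   remove a maximiser of f from V and recurse. *)
Lemma subset_below_average f (n j : nat) (V : {set T}) :
  #|V| = n -> (j <= n)%N ->
  exists2 S : {set T}, S \subset V &
    #|S| = j /\ n%:R * \sum_(a in S) f a <= j%:R * \sum_(a in V) f a.
Proof.
elim: n V => [|n IH] V cV hj.
  by exists V; rewrite ?subxx // cV; move: hj; rewrite leqn0 => /eqP ->.
have [-> | ltjn] := eqVneq j n.+1; first by exists V; rewrite ?subxx.
have /set0Pn [x0 x0V] : V != set0 by rewrite -card_gt0 cV.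
have [a aV amax] := @arg_maxP _ _ T x0 (fun x => x \in V) f x0V.
have cVa : #|V :\ a| = n by move: cV; rewrite (cardsD1 a V) aV; case.
have [|S sS [cS hS]] := IH (V :\ a) cVa; first by rewrite -ltnS ltn_neqAle ltjn.
exists S; first exact: subset_trans sS (subsetDl V [set a]).
split=> //; rewrite (big_setD1 a aV) /=.
have sum_le_max : \sum_(x in S) f x <= j%:R * f a.
  rewrite -cS mulr_natl -sumr_const; apply: ler_sum => x xS.
  by move: (subsetP sS x xS); rewrite !inE => /andP[_ /amax].
rewrite -natr1 mulrDl mul1r mulrDr; lra.
Qed.

(* minsum f j is the least f-sum over the j-subsets of T, truncated at 1
   (the truncation only serves to make the minimum total). *)
Definition minsum f (j : nat) : R :=
  \big[Num.min/1]_(S : {set T} | #|S| == j) \sum_(a in S) f a.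

Lemma minsum_le f (j : nat) (S : {set T}) :
  #|S| = j -> minsum f j <= \sum_(a in S) f a.
Proof. by move=> cS; rewrite /minsum (bigD1 S) ?cS //= ge_min lexx. Qed.

Lemma minsum_ge f (j : nat) (x : R) : x <= 1 ->
  (forall S : {set T}, #|S| = j -> x <= \sum_(a in S) f a) -> x <= minsum f j.
Proof.
move=> x1 lb; rewrite /minsum; elim/big_ind: _ => //.
  by move=> y z xy xz; rewrite le_min xy xz.
by move=> S /eqP; apply: lb.
Qed.

End SubsetSums.

Section Distributions.
Context {R : realFieldType} {T : finType}.
Implicit Types (f g : T -> R).

Lemma sum_subset_le_total f (S : {set T}) :
  (forall a, 0 <= f a) -> \sum_(a in S) f a <= \sum_a f a.
Proof.
by move=> f_ge0; rewrite [leRHS](bigID [in S]) /= lerDl sumr_ge0.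
Qed.

Lemma dist_sum_le1 f (S : {set T}) : distribution f -> \sum_(a in S) f a <= 1.
Proof.
by case=> f01 <-; apply: sum_subset_le_total => a; case/andP: (f01 a).
Qed.

Lemma minsum_ge_dist g (j : nat) (x : R) :
  (j <= #|T|)%N -> distribution g ->
  (forall S : {set T}, #|S| = j -> x <= \sum_(a in S) g a) -> x <= minsum g j.
Proof.
move=> jT dg lb; apply: minsum_ge (lb).
have jT' : (j <= #|[set: T]|)%N by rewrite cardsT.
have [S _ cS] := exists_subset_card _ _ jT'.
exact: le_trans (lb S cS) (dist_sum_le1 _ S dg).
Qed.

Lemma sum_sub_norm1_le f g (S : {set T}) :
  \sum_(a in S) f a - norm1 (fun b => g b - f b) <= \sum_(a in S) g a.
Proof.
have : \sum_(a in S) (f a - g a) <= norm1 (fun b => g b - f b).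
  apply: (le_trans _ (sum_subset_le_total (fun b => `|g b - f b|) S _)).
    by apply: ler_sum => a _; rewrite distrC ler_norm.
  by move=> a; apply: normr_ge0.
by rewrite sumrB; lra.
Qed.

Lemma disc_ge f (a : T) : `|f a - (#|T|%:R)^-1| <= disc f.
Proof. by rewrite /disc (bigD1 a) //= le_max lexx. Qed.

Lemma disc_ge0 f : 0 <= disc f.
Proof. by rewrite /disc; elim/big_ind: _ => // x y x0 _; rewrite le_max x0. Qed.

Lemma minsum_le_uniform f (j : nat) :
  distribution f -> (0 < #|T|)%N -> (j <= #|T|)%N ->
  minsum f j <= j%:R / #|T|%:R.
Proof.
move=> [_ sum1] T_gt0 jT.
have [S _ [cS avgS]] := subset_below_average f _ _ _ (cardsT T) jT.
apply: le_trans (minsum_le f j S cS) _; rewrite ler_pdivlMr ?ltr0n // mulrC.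
by apply: le_trans avgS _; rewrite (eq_bigl _ _ (in_setT (T:=T))) sum1 mulr1.
Qed.

Lemma minsum_ge_disc f (j : nat) :
  distribution f -> (j <= #|T|)%N ->
  j%:R / #|T|%:R - j%:R * disc f <= minsum f j.
Proof.
move=> df jT; apply: minsum_ge_dist => // S cS.
have -> : j%:R / #|T|%:R - j%:R * disc f = \sum_(a in S) ((#|T|%:R)^-1 - disc f).
  by rewrite sumr_const cS -mulr_natl; ring.
apply: ler_sum => a _; have := disc_ge f a.
by rewrite distrC => /(le_trans (ler_norm _)); lra.
Qed.

End Distributions.

Section Increments.
Context {R : realFieldType} {T : finType}.
Implicit Types (f g : T -> R).

Definition lowerset g (a : T) : {set T} := a |: [set x | g x < g a].

Lemma lowerset_self g a : a \in lowerset g a.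
Proof. exact: setU11. Qed.

Lemma lowerset_lower g a x y :
  x \in lowerset g a -> y \notin lowerset g a -> g x <= g y.
Proof.
rewrite !inE negb_or -leNgt => /orP[/eqP -> | gxa] /andP[_ gay] //.
exact: ltW (lt_le_trans gxa gay).
Qed.

(* If a witnesses f <| g, then f <= g on the lower set of a: a point where
   g < f would lie in D^-(f,g), hence g a <= g x. *)
Lemma lowerset_grows f g a :
  f a < g a -> (forall b, b \in Dminus f g -> g a <= g b) ->
  forall x, x \in lowerset g a -> f x <= g x.
Proof.
move=> fga amin x; rewrite !inE => /orP[/eqP -> | gxa]; first exact: ltW.
by rewrite leNgt; apply/negP => /amin; rewrite leNgt gxa.
Qed.

Section MinsumChange.
Variables (f g : T -> R) (U : {set T}).
Hypothesis dist_g : distribution g.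
Hypothesis lowU : forall x y, x \in U -> y \notin U -> g x <= g y.
Hypothesis growU : forall x, x \in U -> f x <= g x.

Lemma minsum_mono_upto (j : nat) :
  (j <= #|U|)%N -> minsum f j <= minsum g j.
Proof.
move=> jU; apply: minsum_ge_dist => //; first exact: leq_trans jU (max_card _).
move=> S cS; rewrite -cS in jU.
have [S' sS'U [cS' le_gS]] := exchange_into_lower g U S lowU jU.
apply: le_trans (minsum_le f j S' (etrans cS' cS)) (le_trans _ le_gS).
by apply: ler_sum => x /(subsetP sS'U); apply: growU.
Qed.

Lemma minsum_jump (a : T) : a \in U ->
  minsum f #|U| + (g a - f a) <= minsum g #|U|.
Proof.
move=> aU; apply: minsum_ge_dist => //; first exact: max_card.
move=> S cS; have leSU : (#|S| <= #|U|)%N by rewrite cS.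
have [S' sS'U [cS' le_gS]] := exchange_into_lower g U S lowU leSU.
have eS'U : S' = U by apply/eqP; rewrite eqEcard sS'U cS' cS leqnn.
apply: le_trans le_gS; rewrite eS'U.
apply: le_trans (lerD (minsum_le f _ U erefl) (lexx _)) _.
rewrite -lerBrDl -sumrB (big_setD1 a aU) /= lerDl.
by apply: sumr_ge0 => x; rewrite inE subr_ge0 => /andP[_ /growU].
Qed.

End MinsumChange.

Lemma minsum_drop f g (j : nat) : (j <= #|T|)%N -> distribution g ->
  minsum f j - norm1 (fun b => g b - f b) <= minsum g j.
Proof.
move=> jT dg; apply: minsum_ge_dist => // S cS.
exact: le_trans (lerB (minsum_le f j S cS) (lexx _)) (sum_sub_norm1_le f g S).
Qed.

End Increments.

Section Weights.
Context {R : realFieldType}.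

Lemma weighted_sum_split (c d D : R) (q k : nat) (x : nat -> R) :
  0 <= c -> (0 < q <= k)%N ->
  (forall j, (j < q)%N -> 0 <= x j) -> d <= x q ->
  (forall j, (q < j <= k)%N -> - D <= x j) ->
  c ^+ (k - q) * d - D * \sum_(q.+1 <= j < k.+1) c ^+ (k - j)
    <= \sum_(1 <= j < k.+1) c ^+ (k - j) * x j.
Proof.
move=> c0 /andP[q0 qk] x_lo x_q x_hi.
rewrite [leRHS](@big_cat_nat _ _ _ q) ?(leqW qk) //=.
rewrite [\sum_(q <= j < k.+1) _](@big_cat_nat _ _ _ q.+1) //= big_nat1.
rewrite -[leLHS]add0r mulr_sumr -sumrN.
apply: lerD.
  rewrite big_nat_cond sumr_ge0 // => j /andP[/andP[_ jq] _].
  by rewrite mulr_ge0 ?exprn_ge0 ?x_lo.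
apply: lerD; first by rewrite ler_wpM2l ?exprn_ge0.
apply: ler_sum_nat => j /andP[qj jk].
by rewrite -mulNr mulrC ler_wpM2l ?exprn_ge0 // x_hi // qj -ltnS.
Qed.

Lemma geometric_sum (A : R) (q k : nat) : (q <= k)%N ->
  A * \sum_(q.+1 <= j < k.+1) (1 + A) ^+ (k - j) = (1 + A) ^+ (k - q) - 1.
Proof.
elim: k => [|k IH]; first by rewrite leqn0 => /eqP ->; rewrite big_geq // mulr0 subrr.
rewrite leq_eqVlt => /orP[/eqP -> | ltqk]; first by rewrite big_geq // mulr0 subnn subrr.
rewrite big_nat_recr //= subnn expr0.
have -> : \sum_(q.+1 <= j < k.+1) (1 + A) ^+ (k.+1 - j)
        = (1 + A) * \sum_(q.+1 <= j < k.+1) (1 + A) ^+ (k - j).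
  by rewrite mulr_sumr; apply: eq_big_nat => j /andP[_ jk]; rewrite subSn // exprS.
rewrite mulrDr mulrCA IH // subSn // exprS; ring.
Qed.

Lemma weighted_count_identity (A : R) (K : nat) :
  A ^+ 2 * \sum_(1 <= j < K.+1) (1 + A) ^+ (K - j) * j%:R + K.+1%:R * A + 1
  = (1 + A) ^+ K.+1.
Proof.
elim: K => [|K IH]; first by rewrite big_geq // mulr0 add0r expr1 mul1r addrC.
rewrite big_nat_recr //= subnn expr0 mul1r.
have -> : \sum_(1 <= j < K.+1) (1 + A) ^+ (K.+1 - j) * j%:R
        = (1 + A) * \sum_(1 <= j < K.+1) (1 + A) ^+ (K - j) * j%:R.
  by rewrite mulr_sumr; apply: eq_big_nat => j /andP[_ jK]; rewrite subSn // exprS mulrA.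
by rewrite [(1 + A) ^+ K.+2]exprS -IH -!natr1; ring.
Qed.

Lemma weighted_count_bound (A : R) (K : nat) : 0 < A ->
  A * \sum_(1 <= j < K.+1) (1 + A) ^+ (K - j) * j%:R <= (1 + A) ^+ K.+1 / A.
Proof.
move=> A_gt0; rewrite ler_pdivlMr // -weighted_count_identity.
rewrite mulrAC -expr2 -addrA lerDl addr_ge0 ?mulr_ge0 ?ltW //.
Qed.

End Weights.

Section Potential.
Context {R : realFieldType} {T : finType}.

Definition potential (A : R) (f : T -> R) : R :=
  \sum_(1 <= j < #|T|.+1) (1 + A) ^+ (#|T| - j) * minsum f j.

(* With a
   the witness of f <| g and q = |lowerset g a|, minsum does not decrease
   below size q, jumps by g a - f a at size q and loses at most
   D = ||g - f||_1 above; the geometric weights make the jump dominate. *)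
Lemma potential_step (A : R) (f g : T -> R) : 0 <= A ->
  distribution g -> trile f g ->
  (forall a, a \in Dplus f g -> norm1 (fun b => g b - f b) <= A * (g a - f a)) ->
  norm1 (fun b => g b - f b) <= A * (potential A g - potential A f).
Proof.
move=> A_ge0 dg [[a fga amin] | <-] bound; last first.
  by rewrite subrr mulr0 /norm1 big1 // => b _; rewrite subrr normr0.
set D := norm1 _; set U := lowerset g a; set q := #|U|.
have aU : a \in U := lowerset_self g a.
have lowU := lowerset_lower g a.
have growU := lowerset_grows _ _ _ fga amin.
have qT : (q <= #|T|)%N := max_card _.
have q_range : (0 < q <= #|T|)%N.
  by rewrite qT andbT card_gt0; apply/set0Pn; exists a.
have base_ge0 : 0 <= 1 + A by rewrite addr_ge0.
have incr : (1 + A) ^+ (#|T| - q) * (g a - f a)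
    - D * \sum_(q.+1 <= j < #|T|.+1) (1 + A) ^+ (#|T| - j)
    <= potential A g - potential A f.
  rewrite /potential -sumrB; under [in leRHS]eq_bigr => j _ do rewrite -mulrBr.
  apply: weighted_sum_split => // [j jq||j /andP[_ jT]].
  - by rewrite subr_ge0 (minsum_mono_upto _ _ _ dg lowU growU) // ltnW.
  - by rewrite lerBrDl (minsum_jump _ _ _ dg lowU growU _ aU).
  - by rewrite lerBrDl minsum_drop.
have jump : D <= A * (g a - f a) := bound a fga.
set c := (1 + A) ^+ _ in incr; set S := \sum_(_ <= _ < _) _ in incr.
have expand : A * (c * (g a - f a) - D * S) = c * (A * (g a - f a) - D) + D.
  have geo : A * S = c - 1 := geometric_sum A _ _ qT.
  transitivity (c * (A * (g a - f a)) - D * (A * S)); first by ring.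
  by rewrite geo; ring.
apply: le_trans (ler_wpM2l A_ge0 incr); rewrite expand lerDr.
by rewrite mulr_ge0 ?subr_ge0 // exprn_ge0.
Qed.

(* From a distribution f0 to any distribution f the potential grows by at
   most disc f0 * sum_j (1+A)^(|T|-j) * j: minsum f j <= j/|T|, while
   minsum f0 j >= j/|T| - j * disc f0. *)
Lemma potential_gap (A : R) (f f0 : T -> R) :
  0 <= A -> (0 < #|T|)%N -> distribution f -> distribution f0 ->
  potential A f - potential A f0
    <= disc f0 * \sum_(1 <= j < #|T|.+1) (1 + A) ^+ (#|T| - j) * j%:R.
Proof.
move=> A_ge0 T_gt0 df df0; rewrite /potential -sumrB mulr_sumr.
apply: ler_sum_nat => j /andP[_ jT]; rewrite -mulrBr mulrCA.
rewrite ler_wpM2l ?exprn_ge0 ?addr_ge0 //.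
have := minsum_le_uniform f j df T_gt0 jT; have := minsum_ge_disc f0 j df0 jT.
by rewrite [j%:R * _]mulrC; lra.
Qed.

End Potential.

Theorem lemma3p2 (R : realFieldType) (C : finType) (k : nat)
  (hk : #|C| = k) (hk1 : (1 <= k)%N)
  (w : nat -> C -> R)
  (hdist : forall n, distribution (w n))
  (hmono : forall n, trile (w n) (w n.+1))
  (A : R) (hA : 1 <= A)
  (hbound : forall (n : nat) (a : C), a \in Dplus (w n) (w n.+1) ->
     norm1 (fun b => w n.+1 b - w n b) <= A * (w n.+1 a - w n a)) :
  forall N : nat,
    \sum_(n < N) norm1 (fun b => w n.+1 b - w n b)
      <= (1 + A) ^+ k.+1 / A * disc (w 0%N).
Proof.
move=> N; subst k.
have A_gt0 : 0 < A := lt_le_trans ltr01 hA.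
have A_ge0 : 0 <= A := ltW A_gt0.
have telescoped : \sum_(n < N) norm1 (fun b => w n.+1 b - w n b)
    <= A * (potential A (w N) - potential A (w 0%N)).
  rewrite -(telescope_sumr (fun n => potential A (w n)) (leq0n N)).
  rewrite mulr_sumr big_mkord; apply: ler_sum => n _.
  exact: potential_step A_ge0 (hdist n.+1) (hmono n) (hbound n).
have gap := potential_gap A (w N) (w 0%N) A_ge0 hk1 (hdist N) (hdist 0%N).
apply: le_trans telescoped (le_trans (ler_wpM2l A_ge0 gap) _).
rewrite mulrCA [_ * disc _]mulrC ler_wpM2l ?disc_ge0 //.
exact: weighted_count_bound.
Qed.
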